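(* Let $A$ be an $n\times n$ P-matrix and let $I$ be the $n\times n$ identity matrix. Then the $2n\times 2n$ matrix \[M=\begin{pmatrix} A & A+I\\ A-I & A\end{pmatrix}\] is also a P-matrix.
   Context: A P-matrix is a square real matrix all of whose principal minors are positive. *)

From HB Require Import structures.
From mathcomp Require Import all_boot all_order all_algebra.
Set Implicit Arguments. Unset Strict Implicit. Unset Printing Implicit Defensive.
Import Order.TTheory GRing.Theory Num.Theory.
Local Open Scope ring_scope.

Definition principal_submx (R : pzRingType) (n : nat) (A : 'M[R]_n) (S : {set 'I_n})
  : 'M[R]_#|S| :=
  \matrix_(i < #|S|, j < #|S|) A (enum_val i) (enum_val j).

Definition is_Pmatrix (R : realFieldType) (n : nat) (A : 'M[R]_n) : Prop :=
  forall S : {set 'I_n}, S != set0 -> 0 < \det (principal_submx A S).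

From HB Require Import structures.
From mathcomp Require Import all_boot all_order all_algebra.
From mathcomp Require Import perm ring lra.
Set Implicit Arguments. Unset Strict Implicit.
Import Order.TTheory GRing.Theory Num.Theory.
Local Open Scope ring_scope.

(* A real matrix is a P-matrix iff it reverses the sign of no nonzero vector:
   for every x <> 0 some i has x_i (xA)_i > 0 (Fiedler-Ptak).  For x = (x1, x2)
   and w = x1 + x2 we get xM = (wA - x2, wA + x1), and the two coordinates of x
   indexed by i contribute x1_i (wA - x2)_i + x2_i (wA + x1)_i = w_i (wA)_i, so a
   coordinate where A preserves the sign of w gives one where M preserves the
   sign of x.  If w = 0 then x2 = -x1 and the first block gives x1_i^2 > 0. *)

Section SubmatrixDeterminants.
Variable R : comPzRingType.

Lemma cofactor_diag n (B : 'M[R]_n) i :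
  cofactor B i i = \det (mxsub (lift i) (lift i) B).
Proof.
rewrite /cofactor addnn -signr_odd odd_double expr0 mul1r; congr (\det _).
by apply/matrixP => a b; rewrite !mxE.
Qed.

Lemma det_add_delta n (B : 'M[R]_n) i c :
  \det (B + c *: delta_mx i i) = \det B + c * cofactor B i i.
Proof.
rewrite (expand_det_row _ i) (expand_det_row B i).
have cofE j : cofactor (B + c *: delta_mx i i) i j = cofactor B i j.
  rewrite /cofactor; congr (_ * \det _); apply/matrixP => a b.
  by rewrite !mxE eq_sym (negbTE (neq_lift _ _)) mulr0 addr0.
under eq_bigr => j _ do rewrite cofE !mxE eqxx /=.
rewrite (bigD1 i) //= (bigD1 i (P := predT)) //= eqxx mulr1.
rewrite mulrDl [RHS]addrAC -!addrA; congr (_ + (_ + _)).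
by apply: eq_bigr => j /negbTE ->; rewrite mulr0 addr0.
Qed.

Lemma det_mxsub_inj m k (B : 'M[R]_m) (h : 'I_k -> 'I_m) :
  injective h -> k = m -> \det (mxsub h h B) = \det B.
Proof.
move=> h_inj eq_km; subst k; set s := perm h_inj.
have -> : mxsub h h B = perm_mx s *m B *m perm_mx s^-1.
  rewrite -row_permE -col_permE row_permEsub col_permEsub -mxsub_comp.
  by apply: eq_mxsub => i; rewrite /= permE.
by rewrite !det_mulmx !det_perm odd_permV mulrC mulrA -signr_addb addbb mul1r.
Qed.

Lemma mulmx_rowsub1_inj k n (f : 'I_k -> 'I_n) (x : 'rV[R]_k) j :
  injective f -> (x *m rowsub f 1%:M) 0 (f j) = x 0 j.
Proof.
move=> f_inj; rewrite mxE (bigD1 j) //= !mxE eqxx mulr1 big1 ?addr0 // => l.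
by rewrite !mxE (inj_eq f_inj) => /negbTE ->; rewrite mulr0.
Qed.

Lemma mulmx_rowsub1_out k n (f : 'I_k -> 'I_n) (x : 'rV[R]_k) i :
  (forall j, f j != i) -> (x *m rowsub f 1%:M) 0 i = 0.
Proof. by move=> fi; rewrite mxE big1 // => l _; rewrite !mxE (negbTE (fi l)) mulr0. Qed.

Lemma mulmx_mxsub k n (f : 'I_k -> 'I_n) (x : 'rV[R]_k) (A : 'M[R]_n) :
  x *m mxsub f f A = colsub f (x *m rowsub f 1%:M *m A).
Proof.
rewrite -mulmxA -rowsubE -mulmx_colsub; congr (_ *m _).
by apply/matrixP => i j; rewrite !mxE.
Qed.

End SubmatrixDeterminants.

Lemma det_mxsub_support_eq0 (R : idomainType) n (C : 'M[R]_n) (x : 'rV[R]_n) :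
  x != 0 -> (forall i, x 0 i != 0 -> (x *m C) 0 i = 0) ->
  exists k (f : 'I_k -> 'I_n), injective f /\ \det (mxsub f f C) = 0.
Proof.
move=> x_neq0 xC_supp; set S := [set i | x 0 i != 0].
pose f := @enum_val _ (mem S); pose y := \row_j x 0 (f j).
have f_inj : injective f by exact: enum_val_inj.
have fS j : x 0 (f j) != 0 by have := enum_valP j; rewrite inE.
have xE : x = y *m rowsub f 1%:M.
  apply/rowP => i; case: (boolP (i \in S)) => iS.
    by rewrite -(enum_rankK_in iS iS) mulmx_rowsub1_inj // mxE.
  rewrite mulmx_rowsub1_out; first by move: iS; rewrite inE negbK => /eqP.
  by move=> j; apply: contraNneq iS => <-; rewrite enum_valP.
exists #|S|, f; split=> //; apply/eqP/det0P; exists y.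
  by apply: contraNneq x_neq0 => y0; rewrite xE y0 mul0mx.
by apply/rowP => j; rewrite mulmx_mxsub -xE mxE xC_supp ?mxE.
Qed.

Section SignNonreversal.
Variable R : realFieldType.

Definition sign_nonreversing n (A : 'M[R]_n) :=
  forall x : 'rV[R]_n, x != 0 -> exists i, 0 < x 0 i * (x *m A) 0 i.

Definition minors_gt0 n (A : 'M[R]_n) :=
  forall k (f : 'I_k -> 'I_n), injective f -> 0 < \det (mxsub f f A).

Lemma Pmatrix_minors_gt0 n (A : 'M[R]_n) : is_Pmatrix A -> minors_gt0 A.
Proof.
move=> PA [|k] f f_inj; first by rewrite det_mx00 ltr01.
pose S := f @: [set: 'I_k.+1].
have f0S : f ord0 \in S by apply: imset_f; rewrite inE.
pose h i := enum_rank_in f0S (f i).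
have hE i : enum_val (h i) = f i.
  by rewrite /h enum_rankK_in //; apply: imset_f; rewrite inE.
have h_inj : injective h by move=> a b /(congr1 enum_val); rewrite !hE => /f_inj.
have -> : mxsub f f A = mxsub h h (principal_submx A S).
  by apply/matrixP => a b; rewrite !mxE !hE.
rewrite det_mxsub_inj //; last by rewrite card_imset // cardsT card_ord.
by apply: PA; apply/set0Pn; exists (f ord0).
Qed.

Lemma minors_gt0_add_delta n (A : 'M[R]_n) j c :
  minors_gt0 A -> 0 <= c -> minors_gt0 (A + c *: delta_mx j j).
Proof.
move=> A_gt0 c_ge0 k f f_inj.
have -> : mxsub f f (A + c *: delta_mx j j) =
    mxsub f f A + c *: mxsub f f (delta_mx j j).
  by apply/matrixP => a b; rewrite !mxE.
case: (pickP (fun i => f i == j)) => [i /eqP fi | fj]; last first.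
  have -> : mxsub f f (delta_mx j j : 'M[R]_n) = 0.
    by apply/matrixP => a b; rewrite !mxE fj.
  by rewrite scaler0 addr0; apply: A_gt0.
have -> : mxsub f f (delta_mx j j : 'M[R]_n) = delta_mx i i.
  by apply/matrixP => a b; rewrite !mxE -fi !(inj_eq f_inj).
rewrite det_add_delta cofactor_diag -mxsub_comp ltr_wpDr ?A_gt0 //.
by rewrite mulr_ge0 // ltW // A_gt0 //; apply: inj_comp => //; exact: lift_inj.
Qed.

Lemma minors_gt0_add_diag n (A : 'M[R]_n) (d : 'rV[R]_n) :
  minors_gt0 A -> (forall i, 0 <= d 0 i) -> minors_gt0 (A + diag_mx d).
Proof.
move=> A_gt0 d_ge0; rewrite diag_mx_sum_delta.
elim: (index_enum _) => [|i s IH]; first by rewrite big_nil addr0.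
by rewrite big_cons addrA addrAC; apply: minors_gt0_add_delta.
Qed.

(* If x_i (xA)_i <= 0 for all i, adding the nonnegative diagonal
   d_i = - (xA)_i / x_i kills xA on the support of x (and d_i = 0 off it,
   since division by 0 gives 0), making a principal minor vanish. *)
Lemma minors_gt0_sign_nonreversing n (A : 'M[R]_n) :
  minors_gt0 A -> sign_nonreversing A.
Proof.
move=> A_gt0 x x_neq0.
case: (pickP (fun i => 0 < x 0 i * (x *m A) 0 i)) => [i | x_rev]; first by exists i.
pose d := \row_i (- (x *m A) 0 i / x 0 i).
have d_ge0 i : 0 <= d 0 i.
  rewrite mxE; have [->|xi_neq0] := eqVneq (x 0 i) 0; first by rewrite invr0 mulr0.
  have -> : - (x *m A) 0 i / x 0 i = - (x 0 i * (x *m A) 0 i) / x 0 i ^+ 2.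
    by field.
  by rewrite divr_ge0 ?sqr_ge0 // oppr_ge0 leNgt x_rev.
have [k [f [f_inj /eqP]]] : exists k (f : 'I_k -> 'I_n),
    injective f /\ \det (mxsub f f (A + diag_mx d)) = 0.
  apply: (det_mxsub_support_eq0 x_neq0) => i xi_neq0.
  by rewrite mulmxDr mul_mx_diag !mxE; field.
by rewrite gt_eqF // minors_gt0_add_diag.
Qed.

Lemma sign_nonreversing_mxsub n (A : 'M[R]_n) k (f : 'I_k -> 'I_n) :
  injective f -> sign_nonreversing A -> sign_nonreversing (mxsub f f A).
Proof.
move=> f_inj A_nr x /rV0Pn [j xj_neq0].
set z := x *m rowsub f 1%:M.
have z_neq0 : z != 0 by apply/rV0Pn; exists (f j); rewrite mulmx_rowsub1_inj.
have [i zi_gt0] := A_nr z z_neq0.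
have [j' fj'] : exists j', f j' = i.
  case: (pickP (fun j' => f j' == i)) => [j' /eqP | fi]; first by exists j'.
  by move: zi_gt0; rewrite mulmx_rowsub1_out ?mul0r ?ltxx // => l; rewrite fi.
by exists j'; rewrite mulmx_mxsub mxE fj' -(mulmx_rowsub1_inj x j' f_inj) fj'.
Qed.

Lemma sign_nonreversing_add_diag n (B : 'M[R]_n) (d : 'rV[R]_n) :
  sign_nonreversing B -> (forall i, 0 <= d 0 i) ->
  sign_nonreversing (B + diag_mx d).
Proof.
move=> B_nr d_ge0 x /B_nr [i xBi_gt0]; exists i.
rewrite mulmxDr mul_mx_diag mxE [X in _ + X]mxE mulrDr mulrA ltr_wpDr //.
by rewrite mulr_ge0 // -expr2 sqr_ge0.
Qed.

Lemma sign_nonreversing_det_neq0 n (B : 'M[R]_n) :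
  sign_nonreversing B -> \det B != 0.
Proof.
by move=> B_nr; apply/negP => /det0P [v /B_nr [i +] vB0]; rewrite vB0 mxE mulr0 ltxx.
Qed.

(* The determinant is affine in B 0 0 with slope the (positive) cofactor, so if
   det B <= 0 some increase of B 0 0 would make the sign-nonreversing
   matrix singular. *)
Lemma sign_nonreversing_det_gt0 n (B : 'M[R]_n) :
  sign_nonreversing B -> 0 < \det B.
Proof.
elim: n B => [|n IH] B B_nr; first by rewrite det_mx00 ltr01.
have cof_gt0 : 0 < cofactor B 0 0.
  by rewrite cofactor_diag; apply/IH/sign_nonreversing_mxsub/B_nr/lift_inj.
rewrite ltNge; apply/negP => detB_le0.
pose c := - \det B / cofactor B 0 0.
have c_ge0 : 0 <= c by rewrite divr_ge0 ?oppr_ge0 // ltW.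
have deltaE : c *: delta_mx 0 0 = diag_mx (c *: delta_mx 0 0) :> 'M[R]_n.+1.
  apply/matrixP => a b; rewrite !mxE eqxx /=.
  by case: (a =P 0) => [->|/eqP/negbTE a0]; case: (b =P 0) => [->|/eqP/negbTE b0];
    rewrite ?eqxx ?a0 ?b0 ?andbF ?mulr0 ?mul0rn // eq_sym b0.
have d_ge0 i : 0 <= (c *: delta_mx 0 0 : 'rV[R]_n.+1) 0 i by rewrite !mxE mulr_ge0.
have /sign_nonreversing_det_neq0 := sign_nonreversing_add_diag B_nr d_ge0.
by rewrite -deltaE det_add_delta divfK ?subrr ?eqxx // gt_eqF.
Qed.

Lemma sign_nonreversing_Pmatrix n (A : 'M[R]_n) :
  sign_nonreversing A -> is_Pmatrix A.
Proof.
move=> A_nr S _.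
have -> : principal_submx A S = mxsub enum_val enum_val A.
  by apply/matrixP => i j; rewrite !mxE.
exact/sign_nonreversing_det_gt0/sign_nonreversing_mxsub/A_nr/enum_val_inj.
Qed.

Lemma sign_nonreversing_block n (A : 'M[R]_n) :
  sign_nonreversing A -> sign_nonreversing (block_mx A (A + 1%:M) (A - 1%:M) A).
Proof.
move=> A_nr x x_neq0; rewrite -(hsubmxK x) mul_row_block.
set x1 := lsubmx x; set x2 := rsubmx x; pose w := x1 + x2.
have -> : x1 *m A + x2 *m (A - 1%:M) = w *m A - x2.
  by rewrite mulmxBr mulmx1 mulmxDl addrA.
have -> : x1 *m (A + 1%:M) + x2 *m A = w *m A + x1.
  by rewrite mulmxDr mulmx1 mulmxDl addrAC.
have [w0|w_neq0] := eqVneq w 0.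
  have x2E : x2 = - x1 by apply/eqP; rewrite -addr_eq0 addrC -/w w0.
  have /rV0Pn [i x1i_neq0] : x1 != 0.
    apply: contraNneq x_neq0 => x10.
    by rewrite -(hsubmxK x) -/x1 -/x2 x2E x10 oppr0 row_mx0.
  exists (lshift n i); rewrite !row_mxEl w0 mul0mx sub0r x2E opprK.
  by rewrite lt0r mulf_neq0 //= -expr2 sqr_ge0.
have [i wi_gt0] := A_nr w w_neq0.
have wiE : w 0 i * (w *m A) 0 i =
    x1 0 i * (w *m A - x2) 0 i + x2 0 i * (w *m A + x1) 0 i.
  by rewrite !mxE; ring.
have [x1i_gt0|] := ltrP 0 (x1 0 i * (w *m A - x2) 0 i).
  by exists (lshift n i); rewrite !row_mxEl.
exists (rshift n i); rewrite !row_mxEr; move: wi_gt0; rewrite wiE; lra.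
Qed.

End SignNonreversal.

Theorem lemma6p7 (R : realFieldType) (n : nat) (A : 'M[R]_n) :
  is_Pmatrix A ->
  is_Pmatrix (block_mx A (A + 1%:M) (A - 1%:M) A).
Proof.
move=> PA; apply/sign_nonreversing_Pmatrix/sign_nonreversing_block.
exact/minors_gt0_sign_nonreversing/Pmatrix_minors_gt0.
Qed.
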